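(* Let $\mathbb{S}$ be a collection of $n$ subsets of $\{1,\dots,m\}$ with $n>m$, each $\mathcal{J}\in\mathbb{S}$ of size $l$. Then $$\max_{\mathcal{J},\mathcal{J}'\in\mathbb{S},\,\mathcal{J}\ne\mathcal{J}'}|\mathcal{J}\cap\mathcal{J}'|\ \ge\ \frac{l^2}{m}.$$ Moreover, if $n=2(m-1)$ and equality holds in this bound, then $\mathbb{S}$ can be partitioned into $m-1$ pairs, each pair consisting of two disjoint subsets of size $m/2$. *)

From mathcomp Require Import all_boot all_order all_algebra.
Set Implicit Arguments. Unset Strict Implicit. Unset Printing Implicit Defensive.

(* Maximal pairwise intersection size over distinct members of S
   (0 if S has fewer than two members). Ground set {1..m} is 'I_m. *)
Definition max_inter (m : nat) (S : {set {set 'I_m}}) : nat :=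
  \max_(J in S) \max_(J' in S | J' != J) #|J :&: J'|.

(* Encode J in S by the row vector w_J = m 1_J - l 1 of Q^m. These vectors lie
   in the hyperplane orthogonal to 1, and <w_J, w_K> = m (m |J & K| - l^2).
   If every intersection were smaller than l^2/m, the n > m vectors would be
   pairwise at obtuse angles in dimension m - 1, which allows at most m of them
   (removing one of them, the others pair positively with its opposite and are
   hence linearly independent). At equality they are pairwise at non-acute
   angles, and nonzero such vectors in dimension d number at most 2d.
   Projecting the other 2m - 3 vectors orthogonally to w_J, into dimension
   m - 2, some projection must vanish: w_J has a negative multiple w_K in the
   family, which forces K = ~: J and |J| = m/2, so S splits into complementary
   pairs. *)

From mathcomp Require Import all_boot all_order all_algebra.
From mathcomp Require Import ring lra zify.
Import Order.TTheory GRing.Theory Num.Theory.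
Local Open Scope ring_scope.
Set Implicit Arguments. Unset Strict Implicit. Unset Printing Implicit Defensive.

Section Dot.
Variables (R : realFieldType) (m : nat).
Implicit Types (a b c : 'rV[R]_m).

Definition dot a b : R := (a *m b^T) 0 0.

Lemma mulmx_trE a b : a *m b^T = (dot a b)%:M.
Proof. exact: mx11_scalar. Qed.

Lemma dotE a b : dot a b = \sum_j a 0 j * b 0 j.
Proof. by rewrite /dot mxE; apply: eq_bigr => j _; rewrite mxE. Qed.

Lemma dotC a b : dot a b = dot b a.
Proof. by rewrite !dotE; apply: eq_bigr => j _; rewrite mulrC. Qed.

Lemma dotBl a b c : dot (a - b) c = dot a c - dot b c.
Proof. by rewrite /dot mulmxBl !mxE. Qed.

Lemma dotZl k a b : dot (k *: a) b = k * dot a b.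
Proof. by rewrite /dot -scalemxAl !mxE. Qed.

Lemma dotNl a b : dot (- a) b = - dot a b.
Proof. by rewrite -scaleN1r dotZl mulN1r. Qed.

Lemma dotBr a b c : dot a (b - c) = dot a b - dot a c.
Proof. by rewrite dotC dotBl !(dotC a). Qed.

Lemma dotZr k a b : dot a (k *: b) = k * dot a b.
Proof. by rewrite dotC dotZl dotC. Qed.

Lemma dot_suml (I : finType) (P : pred I) (F : I -> 'rV[R]_m) b :
  dot (\sum_(i | P i) F i) b = \sum_(i | P i) dot (F i) b.
Proof. by rewrite /dot mulmx_suml summxE. Qed.

Lemma dot_sumr (I : finType) (P : pred I) (F : I -> 'rV[R]_m) a :
  dot a (\sum_(i | P i) F i) = \sum_(i | P i) dot a (F i).
Proof. by rewrite dotC dot_suml; apply: eq_bigr => i _; rewrite dotC. Qed.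

Lemma dot_self_ge0 a : 0 <= dot a a.
Proof. by rewrite dotE sumr_ge0 // => j _; rewrite -expr2 sqr_ge0. Qed.

Lemma dot_self_eq0 a : (dot a a == 0) = (a == 0).
Proof.
apply/eqP/eqP => [|->]; last by rewrite /dot mul0mx mxE.
rewrite dotE => /psumr_eq0P a0; apply/rowP => j; rewrite mxE.
have /eqP : a 0 j * a 0 j = 0 by apply: a0 => // i _; rewrite -expr2 sqr_ge0.
by rewrite mulf_eq0 orbb => /eqP.
Qed.

End Dot.

Section ObtuseFamilies.
Variables (R : realFieldType) (m : nat).

Lemma pointed_nneg_comb_eq0 (I : finType) (P : pred I) (v : I -> 'rV[R]_m)
    x (d : I -> R) :
  (forall i, P i -> 0 < dot x (v i)) -> (forall i, P i -> 0 <= d i) ->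
  dot x (\sum_(i | P i) d i *: v i) = 0 -> forall i, P i -> d i = 0.
Proof.
move=> pointed d_ge0; rewrite dot_sumr => /psumr_eq0P sum0 i Pi.
have /eqP : d i * dot x (v i) = 0.
  rewrite -dotZr; apply: sum0 => // j Pj.
  by rewrite dotZr mulr_ge0 ?d_ge0 // ltW ?pointed.
by rewrite mulf_eq0 (gt_eqF (pointed i Pi)) orbF => /eqP.
Qed.

Lemma obtuse_pointed_free (I : finType) (v : I -> 'rV[R]_m) x (c : I -> R) :
  (forall i j, i != j -> dot (v i) (v j) <= 0) ->
  (forall i, 0 < dot x (v i)) ->
  \sum_i c i *: v i = 0 -> forall i, c i = 0.
Proof.
move=> obtuse pointed.
(* The two sign classes of c give equal vectors y whose self-pairing is a sum
   of obtuse products, so y = 0; pairing y with x then kills each class. *)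
rewrite (bigID (fun i => 0 <= c i)) /= => /eqP; rewrite addr_eq0 -sumrN.
under [X in _ == X]eq_bigr do rewrite -scaleNr.
set y := (X in X == _) => /eqP yE.
have y0 : y = 0.
  apply/eqP; rewrite -dot_self_eq0 eq_le dot_self_ge0 andbT {2}yE dot_suml.
  apply: sumr_le0 => i ci; rewrite dotZl dot_sumr mulr_ge0_le0 //.
  apply: sumr_le0 => j cj; rewrite dotZr mulr_ge0_le0 //.
    by rewrite oppr_ge0; apply: ltW; rewrite ltNge.
  by apply: obtuse; apply: contraNneq cj => <-.
have dot_x_y0 : dot x y = 0 by rewrite y0 /dot trmx0 mulmx0 mxE.
have dot_x_z0 : dot x (\sum_(i | ~~ (0 <= c i)) - c i *: v i) = 0.
  by rewrite -yE.
move=> i; have [ci | ci] := boolP (0 <= c i).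
  by apply: (pointed_nneg_comb_eq0 _ _ dot_x_y0) => // j _; apply: pointed.
apply/eqP; rewrite -oppr_eq0; apply/eqP; move: i ci.
apply: (pointed_nneg_comb_eq0 _ _ dot_x_z0) => [j _ | j cj]; first exact: pointed.
by rewrite oppr_ge0; apply: ltW; rewrite ltNge.
Qed.

Lemma pointed_obtuse_card_rank (I : finType) (A : {set I}) (u : I -> 'rV[R]_m)
    x k (D : 'M[R]_(k, m)) :
  {in A &, forall i j, i != j -> dot (u i) (u j) <= 0} ->
  {in A, forall i, 0 < dot x (u i)} ->
  {in A, forall i, u i *m D^T = 0} ->
  (#|A| + \rank D <= m)%N.
Proof.
move=> obtuse pointed orthD.
pose M := \matrix_(p < #|A|) u (enum_val p).
have freeM : row_free M.
  apply: inj_row_free => a; rewrite mulmx_sum_row => a0; apply/rowP => p.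
  rewrite mxE; move: p; apply: (obtuse_pointed_free (x := x) _ _ a0) => [p q pq|p].
    rewrite !rowK obtuse ?enum_valP //.
    by apply: contra pq => /eqP /enum_val_inj ->.
  by rewrite rowK pointed ?enum_valP.
have MD0 : M *m D^T = 0.
  by apply/row_matrixP => p; rewrite row_mul rowK row0 orthD ?enum_valP.
by have := mxrank_mul_min M D^T; rewrite MD0 mxrank0 (eqP freeM) mxrank_tr; lia.
Qed.

Lemma exists_dot_neq0 (I : finType) (A : {set I}) (u : I -> 'rV[R]_m) :
  {in A, forall i, u i != 0} -> exists x, {in A, forall i, dot x (u i) != 0}.
Proof.
(* On the moment curve x = (t ^+ j)_j each [dot x (u i)] is a nonzero
   polynomial in t, and their product has only finitely many roots. *)
case: m u => [|n] u u_neq0.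
  by exists 0 => i /u_neq0; rewrite (thinmx0 (u i)) eqxx.
pose p i := \poly_(j < n.+1) u i 0 (inord j).
have p_neq0 : {in A, forall i, p i != 0}.
  move=> i /u_neq0; apply: contra => /eqP pi0; apply/eqP/rowP => j.
  have := congr1 (fun q : {poly R} => q`_j) pi0.
  by rewrite coef_poly ltn_ord inord_val coef0 mxE.
pose F := \prod_(i in A) p i.
have F_neq0 : F != 0 by apply/prodf_neq0 => i /p_neq0.
pose ts := [seq (j%:R : R) | j <- iota 0 (size F)].
have ts_uniq : uniq ts.
  by rewrite map_inj_uniq ?iota_uniq // => a b /eqP; rewrite eqr_nat => /eqP.
have /allPn [t _ Ft] : ~~ all (root F) ts.
  apply/negP => /(max_poly_roots F_neq0)/(_ ts_uniq).
  by rewrite size_map size_iota ltnn.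
exists (\row_j t ^+ j) => i iA.
have -> : dot (\row_j t ^+ j) (u i) = (p i).[t].
  by rewrite horner_poly dotE; apply: eq_bigr => j _; rewrite inord_val mxE mulrC.
apply: contra Ft => /eqP pit0.
by rewrite /root /F horner_prod (bigD1 i) //= pit0 mul0r.
Qed.

Lemma obtuse_card_rank (I : finType) (A : {set I}) (u : I -> 'rV[R]_m)
    k (D : 'M[R]_(k, m)) :
  {in A, forall i, u i != 0} ->
  {in A &, forall i j, i != j -> dot (u i) (u j) <= 0} ->
  {in A, forall i, u i *m D^T = 0} ->
  (#|A| + 2 * \rank D <= 2 * m)%N.
Proof.
move=> u_neq0 obtuse orthD.
have [x x_u] := exists_dot_neq0 u_neq0.
pose B := [set i | 0 < dot x (u i)].
have pos : (#|A :&: B| + \rank D <= m)%N.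
  apply: (pointed_obtuse_card_rank (x := x)).
  - by move=> i j /setIP[iA _] /setIP[jA _]; apply: obtuse.
  - by move=> i /setIP[_]; rewrite inE.
  - by move=> i /setIP[iA _]; apply: orthD.
have neg : (#|A :\: B| + \rank D <= m)%N.
  apply: (pointed_obtuse_card_rank (x := - x)).
  - by move=> i j /setDP[iA _] /setDP[jA _]; apply: obtuse.
  - move=> i /setDP[iA]; rewrite inE -leNgt => le0.
    by rewrite dotNl oppr_gt0 lt_neqAle le0 x_u.
  - by move=> i /setDP[iA _]; apply: orthD.
by have := cardsID B A; lia.
Qed.

Lemma strictly_obtuse_card_rank (I : finType) (A : {set I})
    (u : I -> 'rV[R]_m) k (D : 'M[R]_(k, m)) :
  {in A &, forall i j, i != j -> dot (u i) (u j) < 0} ->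
  {in A, forall i, u i *m D^T = 0} ->
  (#|A| + \rank D <= m.+1)%N.
Proof.
move=> obtuse orthD.
have [->|[i0 i0A]] := set_0Vmem A.
  by rewrite cards0 add0n leqW ?rank_leq_col.
have : (#|A :\ i0| + \rank D <= m)%N.
  apply: (pointed_obtuse_card_rank (u := u) (x := - u i0)).
  - by move=> i j /setD1P[_ iA] /setD1P[_ jA] ij; rewrite ltW ?obtuse.
  - by move=> i /setD1P[ii0 iA]; rewrite dotNl oppr_gt0 obtuse // eq_sym.
  - by move=> i /setD1P[_]; apply: orthD.
by have := cardsD1 i0 A; rewrite i0A; lia.
Qed.

Lemma row_free_col_mx_orth k (D : 'M[R]_(k, m)) (w : 'rV[R]_m) :
  row_free D -> D *m w^T = 0 -> w != 0 -> row_free (col_mx D w).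
Proof.
move=> freeD Dw w_neq0; apply: inj_row_free => a.
rewrite -[a]hsubmxK mul_row_col => a0.
have r0 : rsubmx a = 0.
  have := congr1 (mulmx^~ w^T) a0.
  rewrite mulmxDl -!mulmxA Dw mulmx0 add0r mul0mx mulmx_trE mul_mx_scalar.
  by move/eqP; rewrite scalemx_eq0 dot_self_eq0 (negbTE w_neq0) => /eqP.
have l0 : lsubmx a = 0.
  by apply: (row_free_inj freeD); rewrite mul0mx -a0 r0 mul0mx addr0.
by rewrite l0 r0 row_mx0.
Qed.

Lemma obtuse_antiparallel (I : finType) (A : {set I}) (u : I -> 'rV[R]_m)
    k (D : 'M[R]_(k, m)) i1 :
  row_free D ->
  {in A, forall i, u i != 0} ->
  {in A &, forall i j, i != j -> dot (u i) (u j) <= 0} ->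
  {in A, forall i, u i *m D^T = 0} ->
  (2 * m <= #|A| + 2 * k)%N -> i1 \in A ->
  exists2 j, j \in A :\ i1 &
    dot (u i1) (u i1) *: u j = dot (u j) (u i1) *: u i1.
Proof.
move=> freeD u_neq0 obtuse orthD large i1A.
set w := u i1.
(* [p j] is [dot w w] times the projection of [u j] orthogonally to [w]. *)
pose p j := dot w w *: u j - dot (u j) w *: w.
have dot_p j j' : dot (p j) (p j') =
    dot w w * (dot w w * dot (u j) (u j') - dot (u j) w * dot (u j') w).
  by rewrite !(dotBl, dotBr, dotZl, dotZr) (dotC w (u j')); ring.
have p_obtuse : {in A :\ i1 &, forall j j', j != j' -> dot (p j) (p j') <= 0}.
  move=> j j' /setD1P[ji1 jA] /setD1P[j'i1 j'A] jj'.
  rewrite dot_p mulr_ge0_le0 ?dot_self_ge0 // subr_le0 (@le_trans _ _ 0) //.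
    by rewrite mulr_ge0_le0 ?dot_self_ge0 ?obtuse.
  by rewrite mulr_le0 ?obtuse.
have p_orth : {in A :\ i1, forall j, p j *m (col_mx D w)^T = 0}.
  move=> j /setD1P[_ jA]; rewrite tr_col_mx mul_mx_row mulmx_trE.
  have -> : dot (p j) w = 0 by rewrite dotBl !dotZl mulrC subrr.
  by rewrite mulmxBl -!scalemxAl !orthD // !scaler0 subrr raddf0 row_mx0.
have [j jA /subr0_eq pj0] : exists2 j, j \in A :\ i1 & p j = 0.
  have [/exists_inP[j jA /eqP pj0] | none] :=
    boolP [exists j in A :\ i1, p j == 0]; first by exists j.
  have p_neq0 : {in A :\ i1, forall j, p j != 0}.
    by move=> j jA; apply: contra none => pj0; apply/exists_inP; exists j.
  have Dw : D *m w^T = 0 by rewrite -[D]trmxK -trmx_mul orthD ?trmx0.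
  have := obtuse_card_rank p_neq0 p_obtuse p_orth.
  rewrite (eqP (row_free_col_mx_orth freeD Dw (u_neq0 _ i1A))).
  by have := cardsD1 i1 A; rewrite i1A; lia.
by exists j.
Qed.

End ObtuseFamilies.

Section CentredIndicators.
Variables (R : realFieldType) (m : nat).
Implicit Types (J K : {set 'I_m}) (l : nat).

Definition indic J : 'rV[R]_m := \row_j (j \in J)%:R.

Definition centred_ind l J : 'rV[R]_m := m%:R *: indic J - l%:R *: indic setT.

Lemma dot_indic J K : dot (indic J) (indic K) = #|J :&: K|%:R.
Proof.
rewrite dotE -sum1_card natr_sum [RHS]big_mkcond; apply: eq_bigr => j _.
by rewrite !mxE inE; case: (j \in J); case: (j \in K); rewrite ?mulr1 ?mulr0.
Qed.

Lemma rank_indicT : \rank (indic setT) = (0 < m)%N.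
Proof.
rewrite rank_rV; case: (posnP m) => [m0 | m_gt0].
  suff -> : indic setT = 0 by rewrite eqxx.
  by apply/rowP => j; have := ltn_ord j; rewrite [X in (_ < X)%N]m0.
suff -> : indic setT != 0 by [].
by apply/eqP => /rowP/(_ (Ordinal m_gt0))/eqP; rewrite !mxE inE oner_eq0.
Qed.

Lemma centred_ind_orthT l J :
  #|J| = l -> centred_ind l J *m (indic setT)^T = 0.
Proof.
move=> JE; rewrite mulmx_trE /centred_ind dotBl !dotZl !dot_indic setIT setIid.
by rewrite cardsT card_ord JE mulrC subrr raddf0.
Qed.

Lemma dot_centred_ind l J K : #|J| = l -> #|K| = l ->
  dot (centred_ind l J) (centred_ind l K) =
  m%:R * (m%:R * #|J :&: K|%:R - (l ^ 2)%:R).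
Proof.
move=> JE KE; rewrite /centred_ind !(dotBl, dotBr, dotZl, dotZr) !dot_indic.
by rewrite setIT setTI setIid cardsT card_ord JE KE natrX; ring.
Qed.

Lemma centred_ind_neq0 l J : (0 < l < m)%N -> #|J| = l -> centred_ind l J != 0.
Proof.
move=> /andP[l_gt0 l_lt_m] JE; rewrite -(dot_self_eq0 (centred_ind l J)).
rewrite dot_centred_ind // setIid JE mulf_neq0 //.
  by rewrite pnatr_eq0 -lt0n (ltn_trans l_gt0).
by rewrite subr_eq0 -natrM eqr_nat -mulnn eqn_pmul2r // gtn_eqF.
Qed.

Lemma centred_ind_antiparallel l J K (a b : R) : (0 < l < m)%N ->
  0 < a -> b <= 0 -> a *: centred_ind l J = b *: centred_ind l K -> J = ~: K.
Proof.
move=> /andP[]; rewrite -(ltr_nat R) -(ltr_nat R) => l_gt0 l_lt_m a_gt0 b_le0.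
move=> /rowP eqab; apply/setP => j; have := eqab j; rewrite inE !mxE !inE.
by case: (j \in J); case: (j \in K); rewrite //= ?mulr1 ?mulr0 => h; nra.
Qed.

End CentredIndicators.

Section ComplementPairs.
Variable T : finType.
Implicit Types (J X : {set T}) (S : {set {set T}}).

Lemma neq_setC (x : T) J : J != ~: J.
Proof. by apply/eqP => /setP/(_ x); rewrite inE; case: (x \in J). Qed.

Lemma compl_pair_eq J X : X \in [set J; ~: J] -> [set X; ~: X] = [set J; ~: J].
Proof. by rewrite !inE => /orP[] /eqP ->; rewrite ?setCK 1?setUC. Qed.

Definition compl_pairs S := [set [set J; ~: J] | J in S].

Lemma compl_pairs_partition S :
  {in S, forall J, ~: J \in S} -> partition (compl_pairs S) S.
Proof.
move=> S_setC; apply/and3P; split.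
- apply/eqP/setP => J; apply/bigcupP/idP => [[_ /imsetP[K KS ->]] | JS].
    by rewrite !inE => /orP[] /eqP ->; rewrite ?S_setC.
  by exists [set J; ~: J]; [apply: imset_f | rewrite !inE eqxx].
- apply/trivIsetP => _ _ /imsetP[J JS ->] /imsetP[K KS ->] JK.
  rewrite -setI_eq0; apply: contraR JK => /set0Pn[X]; rewrite inE => /andP[XJ XK].
  by rewrite -(compl_pair_eq XJ) -(compl_pair_eq XK).
- apply/imsetP => -[J _ J0].
  by have := setU11 J [set ~: J]; rewrite -J0 inE.
Qed.

Lemma card_compl_pairs (x : T) S :
  {in S, forall J, ~: J \in S} -> (#|compl_pairs S| * 2 = #|S|)%N.
Proof.
move=> S_setC; rewrite (card_partition (compl_pairs_partition S_setC)).
rewrite -sum_nat_const; apply: eq_bigr => _ /imsetP[J _ ->].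
by rewrite cards2 (neq_setC x).
Qed.

End ComplementPairs.

Lemma uniform_pair_card (T : finType) (J K : {set T}) l :
  J != K -> #|J| = l -> #|K| = l -> (0 < l < #|T|)%N.
Proof.
move=> JK JE KE; apply/andP; split.
  rewrite lt0n; apply: contraNneq JK => l0.
  by rewrite (cards0_eq (etrans JE l0)) (cards0_eq (etrans KE l0)).
rewrite ltn_neqAle -{2}JE max_card andbT; apply: contraNneq JK => lT.
have full (A : {set T}) : #|A| = l -> A = setT.
  by move=> AE; apply/eqP; rewrite eqEcard subsetT cardsT AE lT leqnn.
by rewrite (full J JE) (full K KE).
Qed.

Lemma leq_max_inter m (S : {set {set 'I_m}}) J K :
  J \in S -> K \in S -> J != K -> (#|J :&: K| <= max_inter S)%N.
Proof.
move=> JS KS JK; apply: leq_trans (leq_bigmax_cond _ JS).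
by apply: (leq_bigmax_cond (F := fun J' => #|J :&: J'|)); rewrite KS eq_sym JK.
Qed.

Lemma max_inter_lower_bound m l (S : {set {set 'I_m}}) :
  (0 < m)%N -> (m < #|S|)%N -> {in S, forall J : {set 'I_m}, #|J| = l} ->
  (l ^ 2 <= max_inter S * m)%N.
Proof.
move=> m_gt0 large uniform; rewrite leqNgt; apply/negP => small.
pose w := @centred_ind rat m l.
have strict : {in S &, forall J K, J != K -> dot (w J) (w K) < 0}.
  move=> J K JS KS JK; rewrite (dot_centred_ind _ (uniform J JS) (uniform K KS)).
  rewrite pmulr_rlt0 ?ltr0n //.
  by rewrite subr_lt0 -natrM ltr_nat; have := leq_max_inter JS KS JK; nia.
have orth : {in S, forall J, w J *m (indic _ setT)^T = 0}.
  by move=> J JS; apply/centred_ind_orthT/uniform.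
by have := strictly_obtuse_card_rank strict orth; rewrite rank_indicT m_gt0; lia.
Qed.

Lemma extremal_family_setC m l (S : {set {set 'I_m}}) :
  (1 < m)%N -> #|S| = (2 * (m - 1))%N -> {in S, forall J : {set 'I_m}, #|J| = l} ->
  (max_inter S * m = l ^ 2)%N -> {in S, forall J, ~: J \in S}.
Proof.
move=> m_gt1 cardS uniform extremal J1 J1S.
pose w := @centred_ind rat m l.
have obtuse : {in S &, forall J K, J != K -> dot (w J) (w K) <= 0}.
  move=> J K JS KS JK; rewrite (dot_centred_ind _ (uniform J JS) (uniform K KS)).
  rewrite pmulr_rle0 ?ltr0n ?(ltn_trans _ m_gt1) //.
  by rewrite subr_le0 -natrM ler_nat; have := leq_max_inter JS KS JK; nia.
have orth : {in S, forall J, w J *m (indic _ setT)^T = 0}.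
  by move=> J JS; apply/centred_ind_orthT/uniform.
have [K KS KJ1] : exists2 K, K \in S & K != J1.
  have : (0 < #|S :\ J1|)%N by have := cardsD1 J1 S; rewrite J1S; lia.
  by case/card_gt0P => K /setD1P[KJ1 KS]; exists K.
have l_bounds := uniform_pair_card KJ1 (uniform K KS) (uniform J1 J1S).
rewrite card_ord in l_bounds.
have w_neq0 : {in S, forall J, w J != 0}.
  by move=> J /uniform; apply: centred_ind_neq0.
have freeT : row_free (indic rat setT : 'rV_m).
  by rewrite /row_free rank_indicT (ltn_trans _ m_gt1).
have [|J /setD1P[JJ1 JS] wJ] := obtuse_antiparallel freeT w_neq0 obtuse orth _ J1S.
  by rewrite cardS; lia.
have := centred_ind_antiparallel l_bounds _ _ wJ => <- //.
  by rewrite lt0r dot_self_eq0 w_neq0 // dot_self_ge0.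
exact: obtuse.
Qed.

Theorem corollary3p9 (m n l : nat) (S : {set {set 'I_m}})
  (hcard : #|S| = n) (hnm : (m < n)%N)
  (hsize : forall J, J \in S -> #|J| = l) :
  ((l ^ 2)%N%:R / m%:R <= (max_inter S)%:R :> rat) /\
  ((n = 2 * (m - 1))%N ->
   ((max_inter S)%:R = (l ^ 2)%N%:R / m%:R :> rat) ->
   exists P : {set {set {set 'I_m}}},
     partition P S /\ #|P| = (m - 1)%N /\
     forall p, p \in P ->
       exists J J', p = [set J; J'] /\ J != J' /\ [disjoint J & J'] /\
         (2 * #|J| = m)%N /\ (2 * #|J'| = m)%N).
Proof.
split.
  have [m0 | m_gt0] := posnP m; first by rewrite [in m%:R]m0 invr0 mulr0.
  by rewrite ler_pdivrMr ?ltr0n // -natrM ler_nat max_inter_lower_bound ?hcard.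
move=> n_eq eq_bound; have m_gt0 : (0 < m)%N by lia.
have extremal : (max_inter S * m = l ^ 2)%N.
  by apply/eqP; rewrite -(eqr_nat rat) natrM eq_bound divfK // pnatr_eq0 -lt0n.
have S_setC : {in S, forall J, ~: J \in S}.
  by apply: extremal_family_setC extremal => //; lia.
exists (compl_pairs S); split; first exact: compl_pairs_partition.
split.
  apply/eqP; rewrite -(eqn_pmul2r (_ : 0 < 2)%N) //.
  by rewrite (card_compl_pairs (Ordinal m_gt0) S_setC) hcard n_eq mulnC.
move=> _ /imsetP[J JS ->]; exists J, (~: J).
have halfJ : (2 * #|J| = m)%N.
  by have := cardsC J; rewrite card_ord (hsize _ (S_setC J JS)) hsize //; lia.
do !split => //; first exact: (neq_setC (Ordinal m_gt0) J).
  by rewrite disjoints_subset setCK.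
by rewrite (hsize _ (S_setC J JS)) -(hsize _ JS).
Qed.
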